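(* Let $D\ge2$ be an integer and $\mathbf p=(p_1,\dots,p_D)$ a probability distribution with Shannon entropy $H(\mathbf p)=-\sum_ip_i\log_2p_i$, and for $\mathbf i=(i_1,\dots,i_N)\in\{1,\dots,D\}^N$ put $p_{\mathbf i}=p_{i_1}\cdots p_{i_N}$. Fix $R<\frac{H(\mathbf p)+1}{2}$, and for each $N$ let $S(N)$ be a collection of pairs $(\mathbf i,\mathbf s)$ with $\mathbf i\in\{1,\dots,D\}^N$ and $\mathbf s\in\{+,-\}^{N-1}$ such that $|S(N)|=2^{2NR-1}$. Then for every $\eta>0$ there exists $N_0$ such that for all $N\ge N_0$, \[ \sum_{(\mathbf i,\mathbf s)\in S(N)}p_{\mathbf i}\frac{1}{2^{N-1}}<\eta . \] *)

From HB Require Import structures.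
From mathcomp Require Import all_boot all_order all_algebra.
From mathcomp Require Import reals exp.
Set Implicit Arguments. Unset Strict Implicit. Unset Printing Implicit Defensive.
Import Order.TTheory GRing.Theory Num.Theory.
Local Open Scope ring_scope.

Definition log2 {R : realType} (x : R) : R := ln x / ln 2.

(* Shannon entropy H(p) = - sum_i p_i log2 p_i  (with 0 log 0 = 0, since ln 0 = 0 in the library) *)
Definition entropy {R : realType} {D : nat} (p : 'I_D -> R) : R :=
  - \sum_(i < D) p i * log2 (p i).

Definition is_prob_dist {R : realType} {D : nat} (p : 'I_D -> R) : Prop :=
  (forall i, 0 <= p i) /\ \sum_(i < D) p i = 1.

Definition pword {R : realType} {D N : nat} (p : 'I_D -> R) (w : {ffun 'I_N -> 'I_D}) : R :=
  \prod_(k < N) p (w k).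

(* pairs (i, s) with i in {1..D}^N and s in {+,-}^(N-1) (true = +) *)
Definition pairT (D N : nat) : finType :=
  ({ffun 'I_N -> 'I_D} * {ffun 'I_N.-1 -> bool})%type.

(* Chernoff's truncation trick.  Every weight q = p_w / 2^(N-1) of a pair (w, b)
   satisfies q <= e^(-y) + q^(1+s) e^(s y), so for the threshold
   e^(-y) = 2^(-N (2R + gap/2)), where gap = H + 1 - 2R > 0, the sum over S(N) is
   at most |S(N)| e^(-y) + e^(s y) (sum over all pairs of q^(1+s)).  The first
   term is at most 2^(-N gap/2) by the cardinality bound.  The second factorises
   as e^(s y) 2^(-s (N-1)) (sum_i p_i^(1+s))^N, and for small s > 0 the expansion
   e^(-x) <= 1 - x + x^2 gives sum_i p_i^(1+s) <= 2^(-s (H - gap/4)), so the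
   second term is at most 2^s 2^(-N s gap/4). *)

From HB Require Import structures.
From mathcomp Require Import all_boot all_order all_algebra.
From mathcomp Require Import reals sequences exp.
From mathcomp Require Import ring lra.

Set Implicit Arguments.
Unset Strict Implicit.
Unset Printing Implicit Defensive.
Import Order.TTheory GRing.Theory Num.Theory.
Local Open Scope ring_scope.

Lemma expRN_le_quadratic (R : realType) (y : R) :
  0 <= y -> expR (- y) <= 1 - y + y ^+ 2.
Proof.
move=> y_ge0.
(* e^y >= (1 + y/2)^2, and (1 + y/2)^2 (1 - y + y^2) >= 1 for y >= 0 *)
have sqr_le_expR : (1 + y / 2) ^+ 2 <= expR y.
  have -> : expR y = expR (y / 2) ^+ 2 by rewrite -expRM_natl mulrC divfK ?pnatr_eq0.
  by rewrite ler_sqr ?nnegrE ?expR_ge0 ?expR_ge1Dx //; lra.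
have quad_gt0 : 0 < 1 - y + y ^+ 2 by nra.
rewrite expRN -(ler_pM2l (expR_gt0 y)) mulfV ?gt_eqF ?expR_gt0 //.
apply: le_trans (_ : (1 + y / 2) ^+ 2 * (1 - y + y ^+ 2) <= _); first nra.
by rewrite ler_pM2r.
Qed.

Lemma eventually_mulr_expRN_lt (R : realType) (C v eps : R) :
  0 <= C -> 0 < v -> 0 < eps ->
  exists N0 : nat, forall N : nat, (N0 <= N)%N -> C * expR (- (N%:R * v)) < eps.
Proof.
move=> C_ge0 v_gt0 eps_gt0; exists (Num.truncn (C / (v * eps))).+1 => N N0_le_N.
have C_lt : C < N%:R * v * eps.
  have : C / (v * eps) < N%:R.
    by apply: lt_le_trans (truncnS_gt _) _; rewrite ler_nat.
  by rewrite ltr_pdivrMr ?mulr_gt0 // mulrA.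
have Nv_lt : N%:R * v < expR (N%:R * v) by have := expR_ge1Dx (N%:R * v); lra.
rewrite expRN ltr_pdivrMr ?expR_gt0 //.
by apply: lt_trans C_lt _; rewrite mulrC ltr_pM2l.
Qed.

Lemma powR_prod (R : realType) (I : Type) (r : seq I) (P : pred I) (f : I -> R) (s : R) :
  (forall i, P i -> 0 <= f i) ->
  (\prod_(i <- r | P i) f i) `^ s = \prod_(i <- r | P i) f i `^ s.
Proof.
move=> f_ge0.
pose Q (a b : R) := 0 <= a /\ a `^ s = b.
suff [] : Q (\prod_(i <- r | P i) f i) (\prod_(i <- r | P i) f i `^ s) by [].
apply: (big_ind2 Q); first by split => //; rewrite powR1.
  move=> x1 x2 y1 y2 [x1_ge0 <-] [x2_ge0 <-].
  by split; [exact: mulr_ge0 | exact: powRM].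
by move=> i /f_ge0.
Qed.

Lemma le_expRN_add_powR (R : realType) (q y s : R) : 0 <= q -> 0 < s ->
  q <= expR (- y) + q * q `^ s * expR (s * y).
Proof.
move=> q_ge0 s_gt0.
have [q_le|lt_q] := lerP q (expR (- y)).
  by apply: ler_wpDr q_le; rewrite !mulr_ge0 ?powR_ge0 ?expR_ge0.
(* otherwise (q e^y)^s >= 1 *)
have q_gt0 : 0 < q by apply: lt_trans lt_q; apply: expR_gt0.
have Ny_lt : - y < ln q by rewrite -(expRK (- y)) ltr_ln ?posrE ?expR_gt0.
have ge1 : 1 <= q `^ s * expR (s * y).
  rewrite /powR gt_eqF // -expRD -expR0 ler_expR; nra.
apply: ler_wpDl; first exact: expR_ge0.
by rewrite -mulrA ler_peMr.
Qed.

Lemma sum_le_card_expRN (R : realType) (T : finType) (A : {pred T}) (q : T -> R) (y s : R) :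
  (forall x, 0 <= q x) -> 0 < s ->
  \sum_(x in A) q x <= #|A|%:R * expR (- y) + expR (s * y) * \sum_x q x * q x `^ s.
Proof.
move=> q_ge0 s_gt0.
apply: le_trans (_ : \sum_(x in A) (expR (- y) + q x * q x `^ s * expR (s * y)) <= _).
  by apply: ler_sum => x _; apply: le_expRN_add_powR.
rewrite big_split /= sumr_const mulr_natl lerD2l mulr_sumr.
rewrite [leLHS]big_mkcond /=; apply: ler_sum => x _.
by case: (x \in A); [rewrite mulrC | rewrite !mulr_ge0 ?powR_ge0 ?expR_ge0].
Qed.

Lemma sum_pairT_fst (R : realType) (D N : nat) (F : {ffun 'I_N -> 'I_D} -> R) :
  \sum_(x : pairT D N) F x.1 = (2 ^ N.-1)%:R * \sum_w F w.
Proof.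
rewrite -(pair_big xpredT xpredT (fun w (b : {ffun 'I_N.-1 -> bool}) => F w)) /=.
rewrite mulr_sumr; apply: eq_bigr => w _.
by rewrite sumr_const card_ffun card_bool card_ord mulr_natl.
Qed.

Lemma sum_pword_powR (R : realType) (D N : nat) (p : 'I_D -> R) (s : R) :
  (forall i, 0 <= p i) ->
  \sum_(w : {ffun 'I_N -> 'I_D}) pword p w * pword p w `^ s
  = (\sum_(i < D) p i * p i `^ s) ^+ N.
Proof.
move=> p_ge0.
transitivity (\sum_(w : {ffun 'I_N -> 'I_D}) \prod_(k < N) (p (w k) * p (w k) `^ s)).
  by apply: eq_bigr => w _; rewrite /pword powR_prod // -big_split.
by rewrite -(bigA_distr_bigA (fun _ i => p i * p i `^ s)) prodr_const card_ord.
Qed.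

Lemma sum_pword_le_expR (R : realType) (D N : nat) (p : 'I_D -> R)
    (S : {set pairT D N}) (s y : R) :
  (forall i, 0 <= p i) -> 0 < s ->
  \sum_(x in S) pword p x.1 * (1 / 2 ^+ N.-1) <=
  #|S|%:R * expR (- y) +
  expR (s * (y - N.-1%:R * ln 2)) * (\sum_(i < D) p i * p i `^ s) ^+ N.
Proof.
move=> p_ge0 s_gt0.
set c : R := 1 / 2 ^+ N.-1.
have c_gt0 : 0 < c by rewrite divr_gt0 ?exprn_gt0.
have pword_ge0 w : 0 <= pword p w by apply: prodr_ge0.
apply: le_trans (sum_le_card_expRN _ y _ s_gt0) _.
  by move=> x; rewrite mulr_ge0 ?pword_ge0 ?ltW.
have -> : \sum_(x : pairT D N) pword p x.1 * c * (pword p x.1 * c) `^ s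
          = c `^ s * (\sum_(i < D) p i * p i `^ s) ^+ N.
  rewrite (sum_pairT_fst (fun w => pword p w * c * (pword p w * c) `^ s)).
  under eq_bigr do rewrite powRM ?pword_ge0 ?(ltW c_gt0) // mulrACA.
  rewrite -mulr_suml sum_pword_powR // /c natrX.
  by field; rewrite expf_neq0 ?pnatr_eq0.
have -> : c `^ s = expR (- (s * (N.-1%:R * ln 2))).
  by rewrite /powR gt_eqF // /c div1r lnV ?posrE ?exprn_gt0 // lnXn // mulrN mulr_natl.
by rewrite lerD2l mulrA -expRD -mulrN -mulrDr.
Qed.

Lemma mul_powR_le_quadratic (R : realType) (q s : R) :
  0 <= q <= 1 -> 0 < s ->
  q * q `^ s <= q + s * (q * ln q) + s ^+ 2 * (q * ln q ^+ 2).
Proof.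
move=> /andP[q_ge0 q_le1] s_gt0.
have [->|q_neq0] := eqVneq q 0; first by rewrite !mul0r !mulr0 !addr0.
have q_gt0 : 0 < q by rewrite lt_def q_neq0.
have Nsln_ge0 : 0 <= - (s * ln q).
  by rewrite oppr_ge0; apply: mulr_ge0_le0; [exact: ltW | exact: ln_le0].
have -> : q + s * (q * ln q) + s ^+ 2 * (q * ln q ^+ 2) =
          q * (1 + s * ln q + (s * ln q) ^+ 2) by ring.
rewrite /powR (negbTE q_neq0) ler_pM2l //.
by have := expRN_le_quadratic Nsln_ge0; rewrite opprK sqrrN.
Qed.

Lemma sum_mul_ln_entropy (R : realType) (D : nat) (p : 'I_D -> R) :
  \sum_(i < D) p i * ln (p i) = - (ln 2 * entropy p).
Proof.
have ln2_neq0 : ln 2 != 0 :> R by rewrite gt_eqF // ln_gt0 // ltr1n.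
rewrite /entropy /log2 mulrN opprK mulr_sumr; apply: eq_bigr => i _.
by field.
Qed.

Lemma sum_mul_powR_le_expR_entropy (R : realType) (D : nat) (p : 'I_D -> R) (e : R) :
  is_prob_dist p -> 0 < e ->
  exists s, [/\ 0 < s, s <= 1 &
    \sum_(i < D) p i * p i `^ s <= expR (- (s * (ln 2 * entropy p - e)))].
Proof.
move=> [p_ge0 p_sum1] e_gt0.
set K := \sum_(i < D) p i * ln (p i) ^+ 2.
have K_ge0 : 0 <= K by apply: sumr_ge0 => i _; rewrite mulr_ge0 ?sqr_ge0.
have p_le1 i : p i <= 1.
  by rewrite -p_sum1 (bigD1 i) //= lerDl sumr_ge0.
set s := e / (K + 1 + e).
have s_gt0 : 0 < s by rewrite divr_gt0 //; lra.
have s_le1 : s <= 1 by rewrite ler_pdivrMr ?mul1r; lra.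
have sK_le : s * K <= e.
  by rewrite mulrAC ler_pdivrMr ?ler_pM2l //; lra.
exists s; split => //.
apply: le_trans (_ : 1 + s * (\sum_(i < D) p i * ln (p i)) + s ^+ 2 * K <= _).
  rewrite -{1}p_sum1 !mulr_sumr -!big_split /=; apply: ler_sum => i _.
  by apply: mul_powR_le_quadratic; rewrite ?p_ge0 ?p_le1.
apply: le_trans (expR_ge1Dx _); rewrite sum_mul_ln_entropy expr2 -mulrA.
nra.
Qed.

Section ThresholdExponents.
Variables (R : realType) (D : nat) (p : 'I_D -> R) (Rate : R).

Local Notation a := (ln (2 : R)).
Local Notation gap := (entropy p + 1 - 2 * Rate).
Local Notation threshold N := (N%:R * a * (2 * Rate + gap / 2)).

Lemma card_mul_expRN_threshold_le (N : nat) (S : {set pairT D N}) (v : R) :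
  v <= a * gap / 2 -> #|S|%:R <= 2 `^ (2 * N%:R * Rate - 1) ->
  #|S|%:R * expR (- threshold N) <= expR (- (N%:R * v)).
Proof.
move=> v_le card_le.
have a_gt0 : 0 < a by rewrite ln_gt0 // ltr1n.
have {}card_le : #|S|%:R <= expR ((2 * N%:R * Rate - 1) * a).
  by apply: le_trans card_le _; rewrite /powR pnatr_eq0.
apply: le_trans (ler_wpM2r (expR_ge0 _) card_le) _.
rewrite -expRD ler_expR.
have : N%:R * v <= N%:R * (a * gap / 2) by rewrite ler_wpM2l.
nra.
Qed.

Lemma renyi_mul_expR_threshold_le (N : nat) (s G : R) :
  0 < s -> 0 <= G -> G <= expR (- (s * (a * entropy p - a * gap / 4))) ->
  expR (s * (threshold N - N.-1%:R * a)) * G ^+ N <=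
  expR (s * a) * expR (- (N%:R * (s * (a * gap / 4)))).
Proof.
move=> s_gt0 G_ge0 G_le.
have a_gt0 : 0 < a by rewrite ln_gt0 // ltr1n.
have pred_ge : N%:R - 1 <= N.-1%:R :> R.
  by case: N => [|n] /=; rewrite ?sub0r ?lerN10 // -natr1 addrK.
have GN_le : G ^+ N <= expR (N%:R * - (s * (a * entropy p - a * gap / 4))).
  by rewrite expRM_natl lerXn2r ?nnegrE ?expR_ge0.
apply: le_trans (ler_wpM2l (expR_ge0 _) GN_le) _.
rewrite -!expRD ler_expR -subr_ge0.
have -> : s * a + - (N%:R * (s * (a * gap / 4))) -
          (s * (threshold N - N.-1%:R * a) +
           N%:R * - (s * (a * entropy p - a * gap / 4)))
        = s * a * (N.-1%:R - (N%:R - 1)) by field.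
by rewrite mulr_ge0 ?subr_ge0 // mulr_ge0 // ltW.
Qed.

End ThresholdExponents.

Theorem lemma3 (R : realType) (D : nat) (p : 'I_D -> R) (Rate : R)
  (S : forall N : nat, {set pairT D N}) :
  (2 <= D)%N ->
  is_prob_dist p ->
  Rate < (entropy p + 1) / 2 ->
  (forall N : nat, (#|S N|%:R : R) <= 2 `^ (2 * N%:R * Rate - 1)) ->
  forall eta : R, 0 < eta ->
  exists N0 : nat, forall N : nat, (N0 <= N)%N ->
    \sum_(x in S N) pword p x.1 * (1 / 2 ^+ N.-1) < eta.
Proof.
move=> _ p_dist Rate_lt card_S eta eta_gt0.
have [p_ge0 _] := p_dist.
have a_gt0 : 0 < ln 2 :> R by rewrite ln_gt0 // ltr1n.
set gap := entropy p + 1 - 2 * Rate.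
have gap_gt0 : 0 < gap by rewrite /gap; lra.
have e_gt0 : 0 < ln 2 * gap / 4 by rewrite divr_gt0 ?mulr_gt0.
have [s [s_gt0 s_le1 G_le]] := sum_mul_powR_le_expR_entropy p_dist e_gt0.
have G_ge0 : 0 <= \sum_(i < D) p i * p i `^ s.
  by apply: sumr_ge0 => i _; rewrite mulr_ge0 ?powR_ge0.
set v := s * (ln 2 * gap / 4).
have v_le : v <= ln 2 * gap / 2 by rewrite /v; nra.
have decay N : \sum_(x in S N) pword p x.1 * (1 / 2 ^+ N.-1) <=
               (1 + expR (s * ln 2)) * expR (- (N%:R * v)).
  pose y := N%:R * ln 2 * (2 * Rate + gap / 2).
  apply: le_trans (sum_pword_le_expR (S N) y p_ge0 s_gt0) _.
  rewrite [leRHS]mulrDl mul1r; apply: lerD.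
    exact: card_mul_expRN_threshold_le.
  exact: renyi_mul_expR_threshold_le.
have v_gt0 : 0 < v by rewrite mulr_gt0.
have C_ge0 : 0 <= 1 + expR (s * ln 2) by rewrite addr_ge0 ?expR_ge0.
have [N0 decay_lt] := eventually_mulr_expRN_lt C_ge0 v_gt0 eta_gt0.
by exists N0 => N /decay_lt; apply: le_lt_trans (decay N).
Qed.
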